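(* Let $\ell\geq2$ and $w\geq 0$. For every $d\geq0$, $\prod_{\lambda\in\mathrm{Par}(d)}\vartheta_\ell(\lambda)=\ell^{\,l(d)}$. Consequently $$\prod_{d=0}^{w}\ \prod_{\lambda\in\mathrm{Par}(d)}\vartheta_\ell(\lambda)^{k(\ell-2,w-d)}=\ell^{\,b_\ell(w)},$$ where $b_\ell(w)$ is defined by $\sum_{w\geq0}b_\ell(w)q^w=P(q)^{\ell-2}L(q)$.
   Context: $\mathrm{Par}(d)$ is the set of partitions of $d$, $l(\lambda)$ the number of parts, $m_n(\lambda)$ the multiplicity of part $n$, $l(d)=\sum_{\lambda\in\mathrm{Par}(d)}l(\lambda)$, and $L(q)=\sum_{d\geq0}l(d)q^d$, $P(q)=\prod_{i\geq1}(1-q^i)^{-1}$. $k(m,j)$ is the number of $m$-multipartitions of $j$ (tuples of $m$ partitions with total size $j$), i.e. the coefficient of $q^j$ in $P(q)^m$ (with $k(0,j)=\delta_{j0}$). For a prime $p$, $\nu_p$ is the $p$-adic valuation and $d_p(a)=\sum_{j\geq1}\lfloor a/p^j\rfloor$. For $r\geq1$, $\vartheta_{p^r}(\lambda)=\prod_{n\geq1,\ 0\leq\nu_p(n)<r}p^{(r-\nu_p(n))m_n(\lambda)+d_p(m_n(\lambda))}$. If $\ell=\prod_{i=1}^s p_i^{r_i}$ is the prime factorization, $\vartheta_\ell(\lambda)=\prod_{i=1}^s\vartheta_{p_i^{r_i}}(\lambda)$. *)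

From mathcomp Require Import all_boot.
Set Implicit Arguments. Unset Strict Implicit. Unset Printing Implicit Defensive.

(* A partition lambda of d is encoded by its multiplicity vector:
   lambda : {ffun 'I_d -> 'I_d.+1}, where lambda i = m_{i+1}(lambda),
   the multiplicity of the part i+1 (parts of a partition of d lie in 1..d,
   and every multiplicity is at most d).  This is a bijection with Par(d). *)
Definition parcode (d : nat) := {ffun 'I_d -> 'I_d.+1}.

Definition is_par (d : nat) (lam : parcode d) : bool :=
  \sum_(i < d) i.+1 * lam i == d.

Definition mult (d : nat) (lam : parcode d) (n : nat) : nat :=
  match n with
  | 0 => 0
  | n'.+1 => if @insub nat (fun k => k < d) 'I_d n' is Some i then val (lam i) else 0
  end.

Definition nparts (d : nat) (lam : parcode d) : nat := \sum_(i < d) lam i.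

Definition ltot (d : nat) : nat := \sum_(lam : parcode d | is_par lam) nparts lam.

Definition npar (d : nat) : nat := #|[pred lam : parcode d | is_par lam]|.

(* k(m, j): coefficient of q^j in P(q)^m (number of m-multipartitions of j) *)
Fixpoint kmp (m j : nat) : nat :=
  match m with
  | 0 => (j == 0)
  | m'.+1 => \sum_(i < j.+1) npar i * kmp m' (j - i)
  end.

(* d_p(a) = sum_{j >= 1} floor(a / p^j); for p >= 2 terms with j > a vanish *)
Definition dp (p a : nat) : nat := \sum_(1 <= j < a.+1) a %/ p ^ j.

(* vartheta_{p^r}(lambda) = prod_{n >= 1, nu_p(n) < r} p^((r - nu_p(n)) m_n + d_p(m_n));
   factors with n > d have m_n = 0 and equal 1, so n ranges over 1..d. *)
Definition vartheta_pp (d : nat) (p r : nat) (lam : parcode d) : nat :=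
  \prod_(1 <= n < d.+1 | logn p n < r)
     p ^ ((r - logn p n) * mult lam n + dp p (mult lam n)).

Definition vartheta (d : nat) (ell : nat) (lam : parcode d) : nat :=
  \prod_(p <- primes ell) vartheta_pp p (logn p ell) lam.

(* b_ell(w): coefficient of q^w in P(q)^(ell-2) L(q) *)
Definition bcoef (ell w : nat) : nat :=
  \sum_(d < w.+1) kmp (ell - 2) (w - d) * ltot d.

From mathcomp Require Import all_boot zify.
Set Implicit Arguments. Unset Strict Implicit. Unset Printing Implicit Defensive.

(* Since vartheta_ell is a product over the prime powers p^r of ell, it suffices
   to show  prod_{lam in Par(d)} vartheta_{p^r}(lam) = p^(r l(d))  for p prime.
   Comparing exponents, with S(N) = sum_lam m_N(lam) the total number of parts
   equal to N among the partitions of d, this reduces to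
     sum_{n, nu_p(n) < r} sum_lam d_p(m_n(lam)) = sum_N min(nu_p(N), r) S(N).
   The key combinatorial fact is  sum_lam floor(m_n(lam) / q) = S(n q): moving
   t q parts n into t parts n q is a bijection between the partitions with
   m_n >= t q and those with m_{nq} >= t.  Hence sum_lam d_p(m_n) =
   sum_{j >= 1} S(n p^j), and regrouping by N = n p^j (j ranges over a window
   of length r below nu_p(N)) gives the identity. *)

Lemma count_le k D : \sum_(1 <= t < D.+1) (t <= k) = minn k D.
Proof.
elim: D => [|D IH]; first by rewrite big_geq // minn0.
rewrite big_nat_recr //= IH; case: (leqP k D) => h; lia.
Qed.

Lemma divn_count m q D : 0 < q -> m <= D ->
  m %/ q = \sum_(1 <= t < D.+1) (t * q <= m).
Proof.
move=> q0 mD; rewrite (eq_big_nat _ _ (F2 := fun t => nat_of_bool (t <= m %/ q))).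
  by rewrite count_le; apply/esym/minn_idPl; exact: leq_trans (leq_div _ _) mD.
by move=> t _; rewrite leq_divRL.
Qed.

Lemma count_window a r D : a <= D ->
  \sum_(1 <= j < D.+1) ((j <= a) && (a < r + j)) = minn a r.
Proof.
move=> aD.
have window j : 0 < j ->
    nat_of_bool ((j <= a) && (a < r + j)) = (j <= a) - (j <= a - r).
  by move=> j0; case: (leqP j a) => h1; case: (leqP j (a - r)) => h2;
    case: (ltnP a (r + j)) => h3 //=; lia.
rewrite (eq_big_nat _ _ (fun j hj => window j (proj1 (andP hj)))).
rewrite sumnB ?count_le; first lia.
by move=> j _; case: (leqP j (a - r)) => h //; rewrite (leq_trans h (leq_subr _ _)).
Qed.

Lemma sum_multiples q (g : nat -> nat) D : 0 < q ->
  \sum_(1 <= N < D.+1 | q %| N) g N = \sum_(1 <= n < (D %/ q).+1) g (n * q).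
Proof.
move=> q0; elim: D => [|D IH]; first by rewrite div0n !big_geq.
rewrite big_mkcond big_nat_recr //= -big_mkcond IH.
case: (boolP (q %| D.+1)) => h /=.
  have e := divnS D q0; rewrite h add1n in e.
  by rewrite e [RHS]big_nat_recr // -e divnK.
by rewrite addn0 divnS // (negbTE h).
Qed.

Lemma dp_trunc p m D : 1 < p -> m <= D -> dp p m = \sum_(1 <= j < D.+1) m %/ p ^ j.
Proof.
move=> p1 mD; rewrite /dp [RHS](big_cat_nat _ (n := m.+1)) //= ?ltnS //.
rewrite [X in _ = _ + X]big_nat_cond [X in _ = _ + X]big1 ?addn0 // => j /andP[/andP[hj _] _].
by apply: divn_small; exact: ltn_trans hj (ltn_expl _ p1).
Qed.

Lemma sum_card (T : finType) (P Q : pred T) :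
  \sum_(x | P x) (Q x : nat) = #|[set x | P x && Q x]|.
Proof.
rewrite (eq_bigr (fun x => if Q x then 1 else 0)); last by move=> x _; case: (Q x).
by rewrite -big_mkcondr -sum1_card; apply: eq_bigl => x; rewrite inE.
Qed.

Section Partitions.
Variable d : nat.
Implicit Types lam : parcode d.

Lemma multO lam (i : 'I_d) : mult lam i.+1 = lam i.
Proof.
by rewrite /= insubT // => lt_id; congr (nat_of_ord (lam _)); exact: val_inj.
Qed.

Lemma mult_big lam n : d < n -> mult lam n = 0.
Proof. by case: n => // n hn; rewrite /= insubF // ltnNge -ltnS hn. Qed.

Lemma mult_le lam n : mult lam n <= d.
Proof. by case: n => //= n; case: insubP => [i _ _|//]; rewrite -ltnS ltn_ord. Qed.

Lemma nparts_mult lam : nparts lam = \sum_(1 <= n < d.+1) mult lam n.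
Proof. by rewrite big_add1 big_mkord; apply: eq_bigr => i _; rewrite multO. Qed.

Lemma pair_weight lam (x y : 'I_d) : is_par lam -> x != y ->
  x.+1 * lam x + y.+1 * lam y <= d.
Proof.
move=> /eqP par xy; rewrite -[X in _ <= X]par (bigD1 x) //= (bigD1 y) 1?eq_sym //=.
by rewrite addnA leq_addr.
Qed.

Lemma weight_mult lam n : is_par lam -> n * mult lam n <= d.
Proof.
case: n => // n /eqP par; case: (ltnP n d) => [hn|hn]; last by rewrite mult_big ?muln0.
by rewrite (multO lam (Ordinal hn)) -[X in _ <= X]par (bigD1 (Ordinal hn)) //= leq_addr.
Qed.

(* Remove u parts x+1 and add v parts y+1 (truncations are irrelevant when the
   weights x.+1 * u and y.+1 * v agree and u parts x+1 are available). *)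
Definition transfer lam (x y : 'I_d) (u v : nat) : parcode d :=
  [ffun i => inord (if i == x then lam i - u else if i == y then lam i + v else lam i)].

Section Transfer.
Variables (x y : 'I_d) (u v : nat).
Hypotheses (xy : x != y) (balance : x.+1 * u = y.+1 * v).

(* No truncation occurs: the new multiplicity of y+1 stays <= d by pair_weight. *)
Lemma transferE lam i : is_par lam -> u <= lam x ->
  transfer lam x y u v i = (if i == x then lam i - u else if i == y then lam i + v else lam i) :> nat.
Proof.
move=> par ux; rewrite ffunE inordK //.
case: ifP => _; first by rewrite ltnS (leq_trans (leq_subr _ _)) // -ltnS.
case: ifP => [/eqP-> | _]; last exact: ltn_ord.
have := pair_weight par xy; nia.
Qed.

Lemma transfer_par lam : is_par lam -> u <= lam x ->
  is_par (transfer lam x y u v) && (v <= transfer lam x y u v y).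
Proof.
move=> par ux; rewrite transferE // eqxx eq_sym (negbTE xy) leq_addl andbT.
have yx : y != x by rewrite eq_sym.
have split3 (F : 'I_d -> nat) :
    \sum_(i < d) F i = F x + (F y + \sum_(i < d | (i != x) && (i != y)) F i).
  rewrite (bigD1 x) //= (bigD1 y) /=; last by rewrite yx.
  by congr (_ + (_ + _)); apply: eq_bigl => i; rewrite andbC.
have sum_d : \sum_(i < d) i.+1 * lam i = d by exact/eqP.
rewrite split3 in sum_d; rewrite /is_par split3 !transferE // !eqxx (negbTE yx).
rewrite (eq_bigr (fun i : 'I_d => i.+1 * lam i)); last first.
  by move=> i /andP[/negbTE ix /negbTE iy]; rewrite transferE // ix iy.
rewrite -[X in _ == X]sum_d mulnBr mulnDr balance.
have V_le : y.+1 * v <= x.+1 * lam x by rewrite -balance leq_mul.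
apply/eqP; move: V_le; set R := \sum_(i < d | _) _; lia.
Qed.

Lemma transferK lam : is_par lam -> u <= lam x ->
  transfer (transfer lam x y u v) y x v u = lam.
Proof.
move=> par ux.
apply/ffunP => i; apply/val_inj => /=; rewrite ffunE !transferE //.
case: (eqVneq i x) => [->|ix]; first by rewrite (negbTE xy) subnK // inord_val.
by case: (eqVneq i y) => [->|iy]; rewrite ?eqxx ?addnK inord_val.
Qed.

End Transfer.

Lemma card_transfer (x y : 'I_d) u v : x != y -> x.+1 * u = y.+1 * v ->
  #|[set lam : parcode d | is_par lam && (u <= lam x)]| =
  #|[set lam : parcode d | is_par lam && (v <= lam y)]|.
Proof.
move=> xy balance; have yx : y != x by rewrite eq_sym.
rewrite -(@card_in_imset _ _ (fun lam => transfer lam x y u v)); last first.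
  move=> l1 l2; rewrite !inE => /andP[par1 ux1] /andP[par2 ux2] e.
  by rewrite -(transferK xy balance par1 ux1) e transferK.
apply: eq_card => lam; rewrite [in RHS]inE; apply/imsetP/idP => [[l0]|/andP[par vy]].
  by rewrite inE => /andP[par0 ux0] ->; exact: transfer_par.
have /andP[par' ux'] := transfer_par yx (esym balance) par vy.
by exists (transfer lam y x v u); rewrite ?inE ?par' // transferK.
Qed.

(* The same bijection phrased with part sizes N, M of equal total weight N u = M v;
   when that weight exceeds d both sets are empty. *)
Lemma card_mult_ge N M u v : 0 < N -> 0 < M -> 0 < u -> 0 < v -> N * u = M * v ->
  #|[set lam : parcode d | is_par lam && (u <= mult lam N)]| =
  #|[set lam : parcode d | is_par lam && (v <= mult lam M)]|.
Proof.
move=> N0 M0 u0 v0 balance.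
have too_heavy K w : d < K * w ->
    [set lam : parcode d | is_par lam && (w <= mult lam K)] = set0.
  move=> hKw; apply/setP => lam; rewrite !inE; apply/negbTE/negP => /andP[par hw].
  have := weight_mult K par; have : K * w <= K * mult lam K by rewrite leq_mul.
  lia.
have [hd|hd] := ltnP d (N * u); first by rewrite !too_heavy // -balance.
have [eNM|neNM] := eqVneq N M.
  by move: balance; rewrite eNM => /eqP; rewrite eqn_pmul2l // => /eqP->.
have as_ord K w (i : 'I_d) : i.+1 = K ->
    [set lam : parcode d | is_par lam && (w <= mult lam K)] =
    [set lam : parcode d | is_par lam && (w <= lam i)].
  by move=> <-; apply/setP => lam; rewrite !inE multO.
have hN : N.-1 < d by rewrite (ltn_predK N0); nia.
have hM : M.-1 < d by rewrite (ltn_predK M0); nia.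
rewrite (as_ord N u (Ordinal hN)) ?(as_ord M v (Ordinal hM)) /= ?prednK //.
by apply: card_transfer; rewrite ?prednK //; apply: contraNneq neNM => [[]]; lia.
Qed.

Lemma sum_mult_div n q : 0 < n -> 0 < q ->
  \sum_(lam : parcode d | is_par lam) mult lam n %/ q =
  \sum_(lam : parcode d | is_par lam) mult lam (n * q).
Proof.
move=> n0 q0.
rewrite (eq_bigr _ (fun lam _ => divn_count q0 (mult_le lam n))).
rewrite [RHS](eq_bigr _ (fun lam _ => esym (divn1 (mult lam (n * q))))).
rewrite [RHS](eq_bigr _ (fun lam _ => divn_count (ltn0Sn 0) (mult_le lam (n * q)))).
rewrite exchange_big [RHS]exchange_big /=.
apply: eq_big_nat => t /andP[t0 _]; rewrite !sum_card.
by apply: card_mult_ge; rewrite ?muln_gt0 ?t0 ?q0 //; lia.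
Qed.

Definition partcount (N : nat) : nat := \sum_(lam : parcode d | is_par lam) mult lam N.

Lemma partcount_big N : d < N -> partcount N = 0.
Proof. by move=> hN; apply: big1 => lam _; rewrite mult_big. Qed.

Lemma sum_dp p n : 1 < p -> 0 < n ->
  \sum_(lam : parcode d | is_par lam) dp p (mult lam n) =
  \sum_(1 <= j < d.+1) partcount (n * p ^ j).
Proof.
move=> p1 n0; rewrite (eq_bigr _ (fun lam _ => dp_trunc p1 (mult_le lam n))).
rewrite exchange_big /=; apply: eq_big_nat => j _.
by rewrite sum_mult_div // expn_gt0 ltnW.
Qed.

Lemma sum_partcount_multiples p r j : prime p ->
  \sum_(1 <= n < d.+1 | logn p n < r) partcount (n * p ^ j) =
  \sum_(1 <= N < d.+1 | p ^ j %| N) (if logn p N < r + j then partcount N else 0).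
Proof.
move=> pp; have pj0 : 0 < p ^ j by rewrite expn_gt0 prime_gt0.
rewrite sum_multiples // big_mkcond /=.
rewrite (big_cat_nat _ (n := (d %/ p ^ j).+1)) //= ?ltnS ?leq_div //.
rewrite [X in _ + X = _]big_nat_cond [X in _ + X = _]big1 ?addn0.
  apply: eq_big_nat => n /andP[n1 _].
  by rewrite lognM // lognX (logn_prime p pp) eqxx muln1 ltn_add2r; case: ifP.
move=> n /andP[/andP[hn _] _]; rewrite partcount_big; first by case: ifP.
by rewrite ltnNge -leq_divRL // -ltnNge.
Qed.

(* Regrouping by N: S(N) is counted once for each j with j <= nu_p(N) < r + j. *)
Lemma sum_dp_restricted p r : prime p ->
  \sum_(1 <= n < d.+1 | logn p n < r) \sum_(lam : parcode d | is_par lam) dp p (mult lam n) =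
  \sum_(1 <= N < d.+1) minn (logn p N) r * partcount N.
Proof.
move=> pp.
rewrite big_mkcond (eq_big_nat _ _ (F2 := fun n => if logn p n < r then
    \sum_(1 <= j < d.+1) partcount (n * p ^ j) else 0)); last first.
  by move=> n /andP[n0 _]; rewrite sum_dp ?prime_gt1.
rewrite -big_mkcond exchange_big /=.
transitivity (\sum_(1 <= j < d.+1) \sum_(1 <= N < d.+1)
   ((j <= logn p N) && (logn p N < r + j)) * partcount N).
  apply: eq_big_nat => j /andP[j1 _]; rewrite sum_partcount_multiples // big_mkcond /=.
  apply: eq_big_nat => N /andP[N0 _]; rewrite pfactor_dvdn //.
  by case: (j <= _); case: (_ < r + j); rewrite ?mul1n ?mul0n.
rewrite exchange_big /=; apply: eq_big_nat => N /andP[N1 hN].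
rewrite -big_distrl /= count_window //.
have : logn p N < N by apply: leq_trans (ltn_expl _ (prime_gt1 pp)) (dvdn_leq N1 (pfactor_dvdnn p N)).
lia.
Qed.

Lemma vartheta_pp_exponent p r : prime p ->
  \sum_(lam : parcode d | is_par lam) \sum_(1 <= n < d.+1 | logn p n < r)
     ((r - logn p n) * mult lam n + dp p (mult lam n)) = r * ltot d.
Proof.
move=> pp; under eq_bigr => lam _ do rewrite big_split.
rewrite big_split /= [X in _ + X]exchange_big /= sum_dp_restricted //.
under [X in _ + X]eq_bigr => N _ do rewrite /partcount big_distrr.
rewrite [X in _ + X]exchange_big /= -big_split /= /ltot big_distrr /=.
apply: eq_bigr => lam _; rewrite nparts_mult big_distrr /= big_mkcond -big_split /=.
apply: eq_bigr => n _; case: ltnP => h; last by rewrite add0n.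
by rewrite -mulnDl subnK // ltnW.
Qed.

Lemma prod_vartheta_pp p r : prime p ->
  \prod_(lam : parcode d | is_par lam) vartheta_pp p r lam = p ^ (r * ltot d).
Proof.
move=> pp; rewrite -(vartheta_pp_exponent r pp) expn_sum.
by apply: eq_bigr => lam _; rewrite expn_sum.
Qed.

End Partitions.

Lemma prod_expn (I : Type) (r : seq I) (P : pred I) (F : I -> nat) k :
  \prod_(i <- r | P i) F i ^ k = (\prod_(i <- r | P i) F i) ^ k.
Proof. by rewrite (big_morph (fun x => x ^ k) (fun a b => expnMn a b k) (exp1n k)). Qed.

Lemma prod_primes_logn n : 0 < n -> \prod_(p <- primes n) p ^ logn p n = n.
Proof. by move=> n0; rewrite {3}(prod_prime_decomp n0) prime_decompE big_map. Qed.

Lemma prod_vartheta d ell : 0 < ell ->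
  \prod_(lam : parcode d | is_par lam) vartheta ell lam = ell ^ ltot d.
Proof.
move=> ell0; rewrite /vartheta exchange_big /= big_seq.
rewrite (eq_bigr (fun p => (p ^ logn p ell) ^ ltot d)); last first.
  by move=> p; rewrite mem_primes => /and3P[pp _ _]; rewrite prod_vartheta_pp // expnM.
by rewrite -big_seq prod_expn prod_primes_logn.
Qed.

Theorem mainTheorem6 (ell w : nat) (hell : 2 <= ell) :
  (forall d : nat,
     \prod_(lam : parcode d | is_par lam) vartheta ell lam = ell ^ ltot d) /\
  \prod_(d < w.+1) \prod_(lam : parcode d | is_par lam)
     vartheta ell lam ^ kmp (ell - 2) (w - d) = ell ^ bcoef ell w.
Proof.
have ell0 : 0 < ell by apply: leq_trans hell.
split=> [d|]; first exact: prod_vartheta.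
rewrite /bcoef expn_sum; apply: eq_bigr => d _.
by rewrite prod_expn prod_vartheta // -expnM mulnC.
Qed.
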